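(* Let $\mathcal{C}$ be a closed convex set with $\overline\Pi=\mathcal{C}\cap\Pi$ closed and convex, let $S=(x_1,\dots,x_m)$ be i.i.d. from $\mathcal{D}_{\mathcal{X}}$ with empirical distribution $\widehat{\mathcal{D}}_{\mathcal{X}}$, let $\mathcal{F}=\{x\mapsto\mathsf{B}_F(\pi(x)\parallel\pi_0(x)):\pi\in\overline\Pi\}\cup\{x\mapsto\mathsf{B}_F(\pi'(x)\parallel\pi(x)):\pi,\pi'\in\overline\Pi\}$ and $\epsilon_m=\sup_{f\in\mathcal{F}}|\mathbb{E}_{\mathcal{D}_{\mathcal{X}}}[f]-\mathbb{E}_{\widehat{\mathcal{D}}_{\mathcal{X}}}[f]|$. Let $\widehat\pi$ minimize $\mathbb{E}_{\mathcal{D}_{\mathcal{X}}}[\mathsf{B}_F(\pi(x)\parallel\pi_0(x))]$ and $\widehat\pi_S$ minimize $\mathbb{E}_{\widehat{\mathcal{D}}_{\mathcal{X}}}[\mathsf{B}_F(\pi(x)\parallel\pi_0(x))]$ over $\pi\in\overline\Pi$, and assume $\pi^*\in\overline\Pi$. Then, with $\mathbb{E}$ denoting $\mathbb{E}_{x\sim\mathcal{D}_{\mathcal{X}}}$: (1) $\mathbb{E}[\mathsf{B}_F(\widehat\pi(x)\parallel\pi_0(x))]\le\mathbb{E}[\mathsf{B}_F(\widehat\pi_S(x)\parallel\pi_0(x))]\le\mathbb{E}[\mathsf{B}_F(\widehat\pi(x)\parallel\pi_0(x))]+2\epsilon_m$; (2) $\mathrm{Improv}(\widehat\pi_S)\g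e\mathbb{E}[\mathsf{B}_F(\widehat\pi(x)\parallel\pi_0(x))]-\mathbb{E}[\mathsf{B}_F(\pi^*(x)\parallel\widehat\pi(x))]-6\epsilon_m$.
   Context: $\mathcal{X},\mathcal{Y}$ finite; models are maps $\pi\colon\mathcal{X}\to\Delta(\mathcal{Y})$; $\Pi\subseteq\Delta(\mathcal{Y})^{\mathcal{X}}$ closed and convex; $\pi_0$ a baseline model; $\pi^*$ a reference model; $\mathcal{D}_{\mathcal{X}}$ a full-support distribution on $\mathcal{X}$. $F$ is convex and differentiable on the interior of its domain (containing $\Delta(\mathcal{Y})$), $\mathsf{B}_F(p\parallel q)=F(p)-F(q)-\langle\nabla F(q),p-q\rangle$. The improvement of a model $\pi$ is $\mathrm{Improv}(\pi)=\mathbb{E}[\mathsf{B}_F(\pi^*(x)\parallel\pi_0(x))]-\mathbb{E}[\mathsf{B}_F(\pi^*(x)\parallel\pi(x))]$. *)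

From HB Require Import structures.
From mathcomp Require Import all_boot all_order all_algebra.
From mathcomp Require Import all_classical all_reals all_analysis.
Set Implicit Arguments. Unset Strict Implicit. Unset Printing Implicit Defensive.
Import Order.TTheory GRing.Theory Num.Theory.
Import numFieldNormedType.Exports.
Local Open Scope classical_set_scope.
Local Open Scope ring_scope.

(* Y is represented by 'I_n, X by 'I_k.  A point of R^Y is a row vector
   'rV[R]_n ; a model pi : X -> Delta(Y) is a matrix 'M[R]_(k, n) whose
   x-th row  row x pi  is pi(x). *)

Section Defs.
Variable R : realType.

Definition simplex (n : nat) : set 'rV[R]_n :=
  [set p | (forall j, 0 <= p 0 j) /\ \sum_j p 0 j = 1].

Definition models (k n : nat) : set 'M[R]_(k, n) :=
  [set pi | forall x, simplex (row x pi)].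

Definition convex_set_ {V : lmodType R} (A : set V) :=
  forall a b (t : R), A a -> A b -> 0 <= t <= 1 -> A (t *: a + (1 - t) *: b).

Definition convex_on {V : lmodType R} (D : set V) (F : V -> R) :=
  forall a b (t : R), D a -> D b -> 0 <= t <= 1 ->
    F (t *: a + (1 - t) *: b) <= t * F a + (1 - t) * F b.

Definition grad (n : nat) (F : 'rV[R]_n -> R) (q : 'rV[R]_n) : 'rV[R]_n :=
  \row_j derive F q (delta_mx 0 j).

Definition breg (n : nat) (F : 'rV[R]_n -> R) (p q : 'rV[R]_n) : R :=
  F p - F q - \sum_j (grad F q) 0 j * (p - q) 0 j.

Definition expect (k : nat) (D : 'I_k -> R) (f : 'I_k -> R) : R :=
  \sum_x D x * f x.

Definition emp_expect (k m : nat) (S : 'I_m -> 'I_k) (f : 'I_k -> R) : R :=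
  m%:R^-1 * \sum_i f (S i).

Definition Fclass (k n : nat) (F : 'rV[R]_n -> R) (Pibar : set 'M[R]_(k, n))
    (pi0 : 'M[R]_(k, n)) : set ('I_k -> R) :=
  [set f | (exists2 p, Pibar p & f = (fun x => breg F (row x p) (row x pi0)))
        \/ (exists p p', [/\ Pibar p, Pibar p' &
                 f = (fun x => breg F (row x p') (row x p))])].

Definition eps_m (k n m : nat) (F : 'rV[R]_n -> R) (Pibar : set 'M[R]_(k, n))
    (pi0 : 'M[R]_(k, n)) (D : 'I_k -> R) (S : 'I_m -> 'I_k) : \bar R :=
  ereal_sup [set (`|expect D f - emp_expect S f|)%:E | f in Fclass F Pibar pi0].

Definition obj (k n : nat) (F : 'rV[R]_n -> R) (D : 'I_k -> R)
    (pi pi0 : 'M[R]_(k, n)) : R :=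
  expect D (fun x => breg F (row x pi) (row x pi0)).

Definition improv (k n : nat) (F : 'rV[R]_n -> R) (D : 'I_k -> R)
    (pistar pi0 pi : 'M[R]_(k, n)) : R :=
  expect D (fun x => breg F (row x pistar) (row x pi0))
  - expect D (fun x => breg F (row x pistar) (row x pi)).

End Defs.

From HB Require Import structures.
From mathcomp Require Import all_boot all_order all_algebra.
From mathcomp Require Import all_classical all_reals all_analysis.
From mathcomp Require Import ring lra.
Set Implicit Arguments. Unset Strict Implicit. Unset Printing Implicit Defensive.
Import Order.TTheory GRing.Theory Num.Theory.
Import numFieldNormedType.Exports.
Local Open Scope classical_set_scope.
Local Open Scope ring_scope.

(* Part (1) is the usual ERM argument: comparing population and empirical
   objectives costs at most eps for each of pihat and pihatS.  For (2), pihatS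
   is the Bregman projection of pi0 onto the convex set C `&` Pi for the
   empirical distribution, so the generalised Pythagorean inequality
     Ê B(pistar || pihatS) + Ê B(pihatS || pi0) <= Ê B(pistar || pi0)
   holds: by the three-point identity its defect is a difference of gradient
   pairings, which is the one-sided derivative at pihatS of the empirical
   objective along the segment towards pistar, hence nonnegative by
   minimality.  Replacing each of the three empirical averages by its
   expectation costs eps, so Improv(pihatS) >= E B(pihatS || pi0) - 3 eps
   >= E B(pihat || pi0) - 3 eps. *)

Lemma near_at_right0 (R : realType) (P : R -> Prop) :
  (forall t, 0 < t <= 1 -> P t) -> \forall t \near 0^'+, P t.
Proof.
move=> HP; near=> t; apply: HP; apply/andP; split.
- by near: t; exact: nbhs_right_gt.
- by near: t; apply: nbhs_right_le; exact: ltr01.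
Unshelve. all: by end_near. Qed.

Section Bregman.
Variables (R : realType) (n : nat) (F : 'rV[R]_n -> R).

Lemma derive_grad q v : differentiable F q ->
  derive F q v = \sum_j grad F q 0 j * v 0 j.
Proof.
move=> dF; rewrite deriveE // {1}(row_sum_delta v) linear_sum /=.
by apply: eq_bigr => j _; rewrite linearZ /= mxE deriveE // mulrC.
Qed.

Lemma difference_quotient_cvg q v : differentiable F q ->
  (fun t : R => t^-1 * (F (q + t *: v) - F q)) @ 0^'+ -->
  \sum_j grad F q 0 j * v 0 j.
Proof.
move=> dF; rewrite -derive_grad //.
have := cvg_dnbhs_at_right (diff_derivable (v := v) dF).
apply: cvg_trans; apply: near_eq_cvg; near=> t; rewrite /= [_ *: v + q]addrC.
Unshelve. all: by end_near. Qed.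

Lemma sum_difference_quotient_cvg (I : finType) (q v : I -> 'rV[R]_n) :
  (forall i, differentiable F (q i)) ->
  (fun t : R => \sum_i t^-1 * (F (q i + t *: v i) - F (q i))) @ 0^'+ -->
  \sum_i \sum_j grad F (q i) 0 j * v i 0 j.
Proof.
move=> dF; apply: (@cvg_big R I +%R 0 xpredT add_continuous) => // i _.
exact: difference_quotient_cvg.
Qed.

Lemma breg_ge0 (dom : set 'rV[R]_n) p q : convex_on dom F ->
  dom p -> dom q -> differentiable F q -> 0 <= breg F p q.
Proof.
move=> Fcvx domp domq dF; rewrite /breg subr_ge0.
move/cvgr_to_le: (difference_quotient_cvg (v := p - q) dF); apply.
apply: near_at_right0 => t /andP[t0 t1].
have -> : q + t *: (p - q) = t *: p + (1 - t) *: q.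
  by rewrite scalerBr scalerBl scale1r addrCA addrA.
have := Fcvx p q t domp domq; rewrite (ltW t0) t1 => /(_ isT) Fconv.
rewrite ler_pdivrMl //; lra.
Qed.

Lemma breg_along_segment b c v (t : R) :
  breg F (b + t *: v) c - breg F b c =
  F (b + t *: v) - F b - t * \sum_j grad F c 0 j * v 0 j.
Proof.
rewrite /breg mulr_sumr (eq_bigr (fun j => grad F c 0 j * (b - c) 0 j +
  t * (grad F c 0 j * v 0 j))); last by move=> j _; rewrite !mxE; ring.
rewrite big_split /=; ring.
Qed.

Lemma breg_three_point a b c :
  breg F a c - breg F a b - breg F b c =
  \sum_j grad F b 0 j * (a - b) 0 j - \sum_j grad F c 0 j * (a - b) 0 j.
Proof.
rewrite /breg; have -> : \sum_j grad F c 0 j * (a - c) 0 j =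
    \sum_j grad F c 0 j * (a - b) 0 j + \sum_j grad F c 0 j * (b - c) 0 j.
  by rewrite -big_split; apply: eq_bigr => j _; rewrite !mxE /=; ring.
ring.
Qed.

Lemma breg_pythagoras_sum (I : finType) (a b c : I -> 'rV[R]_n) :
  (forall i, differentiable F (b i)) ->
  (forall t : R, 0 < t <= 1 -> \sum_i breg F (b i) (c i) <=
      \sum_i breg F (b i + t *: (a i - b i)) (c i)) ->
  \sum_i breg F (a i) (b i) + \sum_i breg F (b i) (c i) <=
  \sum_i breg F (a i) (c i).
Proof.
move=> dF bmin.
rewrite -subr_ge0 opprD addrA -!sumrB.
under eq_bigr do rewrite breg_three_point.
rewrite sumrB subr_ge0.
move/cvgr_to_ge: (sum_difference_quotient_cvg (v := fun i => a i - b i) dF); apply.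
apply: near_at_right0 => t /andP[t0 t1].
have := bmin t; rewrite t0 t1 => /(_ isT); rewrite -subr_ge0 -sumrB.
under eq_bigr do rewrite breg_along_segment.
rewrite sumrB => seg_ge0.
by rewrite -mulr_sumr ler_pdivlMl // mulr_sumr -subr_ge0.
Qed.
End Bregman.

Definition emp_obj {R : realType} {k n m : nat} (F : 'rV[R]_n -> R)
    (S : 'I_m -> 'I_k) (pi pi0 : 'M[R]_(k, n)) : R :=
  emp_expect S (fun x => breg F (row x pi) (row x pi0)).

Lemma expect_ge0 (R : realType) (k : nat) (D f : 'I_k -> R) :
  (forall x, 0 <= D x) -> (forall x, 0 <= f x) -> 0 <= expect D f.
Proof. by move=> D_ge0 f_ge0; apply: sumr_ge0 => x _; rewrite mulr_ge0. Qed.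

Lemma emp_obj_pythagoras (R : realType) (k n m : nat) (F : 'rV[R]_n -> R)
    (S : 'I_m -> 'I_k) (P : set 'M[R]_(k, n)) (pi0 piS pi : 'M[R]_(k, n)) :
  (0 < m)%N -> convex_set_ P -> P pi -> P piS ->
  (forall x, differentiable F (row x piS)) ->
  (forall p, P p -> emp_obj F S piS pi0 <= emp_obj F S p pi0) ->
  emp_expect S (fun x => breg F (row x pi) (row x piS)) + emp_obj F S piS pi0
  <= emp_obj F S pi pi0.
Proof.
move=> m_gt0 Pcvx Ppi PpiS dF piS_min.
have m_inv_gt0 : 0 < m%:R^-1 :> R by rewrite invr_gt0 ltr0n.
rewrite /emp_obj /emp_expect -mulrDr ler_pM2l //.
apply: (breg_pythagoras_sum (a := fun i => row (S i) pi)); first by move=> i; exact: dF.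
move=> t /andP[t0 t1].
have segment_row x :
    row x (t *: pi + (1 - t) *: piS) = row x piS + t *: (row x pi - row x piS).
  by apply/rowP => j; rewrite !mxE; ring.
have /piS_min : P (t *: pi + (1 - t) *: piS) by apply: Pcvx; rewrite ?(ltW t0).
rewrite /emp_obj /emp_expect ler_pM2l // => /le_trans; apply.
by under eq_bigr do rewrite segment_row.
Qed.

Section EmpiricalRiskMinimization.
Variables (R : realType) (k n m : nat) (F : 'rV[R]_n -> R).
Variables (Pb : set 'M[R]_(k, n)) (pi0 : 'M[R]_(k, n)).
Variables (D : 'I_k -> R) (S : 'I_m -> 'I_k) (e : R).
Hypothesis Fclass_dev :
  forall f, Fclass F Pb pi0 f -> `|expect D f - emp_expect S f| <= e.

Lemma obj_dev p : Pb p -> `|obj F D p pi0 - emp_obj F S p pi0| <= e.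
Proof. by move=> Pp; apply: Fclass_dev; left; exists p. Qed.

Lemma breg_dev p p' : Pb p -> Pb p' ->
  `|expect D (fun x => breg F (row x p') (row x p))
    - emp_expect S (fun x => breg F (row x p') (row x p))| <= e.
Proof. by move=> Pp Pp'; apply: Fclass_dev; right; exists p, p'. Qed.

Variables (pihat pihatS : 'M[R]_(k, n)).
Hypotheses (Pb_pihat : Pb pihat) (Pb_pihatS : Pb pihatS).
Hypothesis pihat_min : forall p, Pb p -> obj F D pihat pi0 <= obj F D p pi0.
Hypothesis pihatS_min :
  forall p, Pb p -> emp_obj F S pihatS pi0 <= emp_obj F S p pi0.

Lemma obj_erm_le : obj F D pihatS pi0 <= obj F D pihat pi0 + 2 * e.
Proof.
have /ler_normlP[? ?] := obj_dev Pb_pihat.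
have /ler_normlP[? ?] := obj_dev Pb_pihatS.
have := pihatS_min Pb_pihat; lra.
Qed.

Lemma improv_erm_ge pistar : (0 < m)%N -> convex_set_ Pb -> Pb pistar ->
  (forall x, differentiable F (row x pihatS)) ->
  obj F D pihat pi0 - 3 * e <= improv F D pistar pi0 pihatS.
Proof.
move=> m_gt0 Pb_cvx Pb_pistar dF.
have := emp_obj_pythagoras m_gt0 Pb_cvx Pb_pistar Pb_pihatS dF pihatS_min.
have /ler_normlP[? ?] := obj_dev Pb_pihatS.
have /ler_normlP[? ?] := obj_dev Pb_pistar.
have /ler_normlP[? ?] := breg_dev Pb_pihatS Pb_pistar.
have := pihat_min Pb_pihatS; rewrite /improv -/(obj F D pistar pi0); lra.
Qed.

End EmpiricalRiskMinimization.

Lemma eps_m_ub (R : realType) (k n m : nat) (F : 'rV[R]_n -> R)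
    (Pb : set 'M[R]_(k, n)) (pi0 : 'M[R]_(k, n)) (D : 'I_k -> R)
    (S : 'I_m -> 'I_k) f :
  Fclass F Pb pi0 f ->
  ((`|expect D f - emp_expect S f|)%:E <= eps_m F Pb pi0 D S)%E.
Proof. by move=> Ff; apply: ereal_sup_ubound; exists f. Qed.

Lemma eps_m_ge0 (R : realType) (k n m : nat) (F : 'rV[R]_n -> R)
    (Pb : set 'M[R]_(k, n)) (pi0 : 'M[R]_(k, n)) (D : 'I_k -> R)
    (S : 'I_m -> 'I_k) p :
  Pb p -> (0 <= eps_m F Pb pi0 D S)%E.
Proof. by move=> Pp; apply: le_trans (eps_m_ub D S _) => //; left; exists p. Qed.

Theorem lemma5 (R : realType) (k n m : nat)
  (* F : convex, differentiable on the interior of its domain dom, which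
     contains Delta(Y) *)
  (F : 'rV[R]_n -> R) (dom : set 'rV[R]_n)
  (Hdomc : convex_set_ dom) (HFc : convex_on dom F)
  (Hsimplex : @simplex R n `<=` interior dom)
  (Hdiff : forall q, interior dom q -> differentiable F q)
  (* the model class Pi and the closed convex set C *)
  (Pi C : set 'M[R]_(k, n))
  (HPi : Pi `<=` @models R k n) (HPicl : closed Pi) (HPicv : convex_set_ Pi)
  (HCcl : closed C) (HCcv : convex_set_ C)
  (HPibcl : closed (C `&` Pi)) (HPibcv : convex_set_ (C `&` Pi))
  (* baseline and reference models *)
  (pi0 pistar : 'M[R]_(k, n)) (Hpi0 : @models R k n pi0)
  (Hpistar : (C `&` Pi) pistar)
  (* full-support distribution on X *)
  (D : 'I_k -> R) (HD : forall x, 0 < D x) (HD1 : \sum_x D x = 1)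
  (* sample S = (x_1, ..., x_m) *)
  (Hm : (0 < m)%N) (S : 'I_m -> 'I_k)
  (* population and empirical minimisers over Pibar = C ∩ Pi *)
  (pihat pihatS : 'M[R]_(k, n))
  (Hpihat : (C `&` Pi) pihat)
  (Hpihat_min : forall p, (C `&` Pi) p -> obj F D pihat pi0 <= obj F D p pi0)
  (HpihatS : (C `&` Pi) pihatS)
  (HpihatS_min : forall p, (C `&` Pi) p ->
     emp_expect S (fun x => breg F (row x pihatS) (row x pi0))
     <= emp_expect S (fun x => breg F (row x p) (row x pi0))) :
  let eps := eps_m F (C `&` Pi) pi0 D S in
  [/\ obj F D pihat pi0 <= obj F D pihatS pi0,
      ((obj F D pihatS pi0)%:E <= (obj F D pihat pi0)%:E + 2%:E * eps)%E
    & ((improv F D pistar pi0 pihatS)%:E >=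
        (obj F D pihat pi0
         - expect D (fun x => breg F (row x pistar) (row x pihat)))%:E
        - 6%:E * eps)%E].
Proof.
move=> eps; set Pb := C `&` Pi.
have rows_interior p : Pb p -> forall x, interior dom (row x p).
  by case=> _ /HPi Pp x; exact: Hsimplex.
have dF p : Pb p -> forall x, differentiable F (row x p).
  by move=> /rows_interior Pp x; exact: Hdiff.
have breg_pistar_pihat_ge0 :
    0 <= expect D (fun x => breg F (row x pistar) (row x pihat)).
  apply: expect_ge0 => x; first exact: ltW.
  exact: (breg_ge0 HFc (interior_subset (rows_interior _ Hpistar x))
    (interior_subset (rows_interior _ Hpihat x)) (dF _ Hpihat x)).
have obj_le : obj F D pihat pi0 <= obj F D pihatS pi0 := Hpihat_min _ HpihatS.
have eps_ub f : Fclass F Pb pi0 f ->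
    ((`|expect D f - emp_expect S f|)%:E <= eps)%E.
  exact: eps_m_ub.
have eps_ge0 : (0 <= eps)%E by exact: eps_m_ge0 Hpihat.
clearbody eps; case: eps eps_ge0 eps_ub => [e | _ _ | //].
- rewrite lee_fin => e_ge0 eps_ub.
  have dev f : Fclass F Pb pi0 f -> `|expect D f - emp_expect S f| <= e.
    by move=> Ff; rewrite -lee_fin; exact: eps_ub.
  split=> //.
  + rewrite -EFinM -EFinD lee_fin.
    exact: (obj_erm_le dev Hpihat HpihatS HpihatS_min).
  + rewrite -EFinM -EFinB lee_fin.
    have := improv_erm_ge dev HpihatS Hpihat_min HpihatS_min Hm HPibcv Hpistar
      (dF _ HpihatS).
    lra.
- by split=> //; rewrite gt0_muley ?lte_fin // ?addey ?leey ?addeNy ?leNye.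
Qed.
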